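(* Let $(u_k)_{k\ge0}$ be generated by the IHT method with parameter $L>0$, and let $\sigma:=\min\big(b,\sqrt{2\beta/(L+\alpha)}\big)$. Then for every $k\ge1$ and every $p\in[1,\infty)$, $$\|u_{k+1}-u_k\|_{L^p(\Omega)}^p\ge\sigma^p\,\|\chi_k-\chi_{k+1}\|_{L^1(\Omega)}.$$
   Context: Let $\Omega\subset\mathbb R^n$ be a bounded open set with Lebesgue measure. Fix $\alpha\ge0$, $\beta>0$, $b\in(0,+\infty]$ and set $U_{ad}:=\{v\in L^2(\Omega): |v(x)|\le b\text{ a.e. in }\Omega\}$. For $t\in\mathbb R$ let $|t|_0:=0$ if $t=0$ and $|t|_0:=1$ if $t\ne0$; for measurable $u$ let $\|u\|_0:=\operatorname{meas}\{x\in\Omega:u(x)\ne0\}$. Define $g(u):=\frac\alpha2\|u\|_{L^2(\Omega)}^2+\beta\|u\|_0$. The function $f:L^2(\Omega)\to\mathbb R$ is weakly lower semicontinuous, bounded from below and Fréchet differentiable; $\nabla f(u)\in L^2(\Omega)$ is the Riesz representative of its derivative, and $\nabla f$ is Lipschitz continuous on $L^2(\Omega)$ with constant $L_f$. IHT method: given $L>0$ and $u_0\in U_{ad}$, for $k=0,1,\dots$ let $u_{k+1}$ be a global solution of $\min_{u\in U_{ad}} f(u_k)+\int_\Omega\nabla f(u_k)(u-u_k)\,dx+\frac L2\|u-u_k\|_{L^2(\Omega)}^2+g(u)$ (a solution exists). Let $\chi_k$ denote the characteristic function of $\{x\in\Omega:u_k(x)\ne0\}$. *)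

From HB Require Import structures.
From mathcomp Require Import all_boot all_order all_algebra.
From mathcomp Require Import all_classical all_reals all_analysis.
Set Implicit Arguments. Unset Strict Implicit. Unset Printing Implicit Defensive.
Import Order.TTheory GRing.Theory Num.Theory.
Import numFieldNormedType.Exports.
Local Open Scope classical_set_scope.
Local Open Scope ring_scope.

(* R^n is modelled as n.-tuple R with its product (Borel) sigma-algebra. *)
Notation Rn R n := (n.-tuple R).

Section Defs.
Variables (R : realType) (n : nat).
Variable mu : {measure set (Rn R n) -> \bar R}.

Definition is_lebesgue_measure : Prop :=
  forall a b : Rn R n, (forall i, tnth a i <= tnth b i) ->
    mu [set x | forall i, tnth a i <= tnth x i < tnth b i] =
    (\prod_(i < n) (tnth b i - tnth a i))%:E.

Definition is_open_set (Om : set (Rn R n)) : Prop :=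
  forall x, Om x -> exists2 e : R, 0 < e &
    forall y : Rn R n, (forall i, `|tnth y i - tnth x i| < e) -> Om y.

Definition is_bounded_set (Om : set (Rn R n)) : Prop :=
  exists M : R, forall x, Om x -> forall i, `|tnth x i| <= M.

Variable Om : set (Rn R n).

Definition inL2 (u : Rn R n -> R) : Prop :=
  measurable_fun Om u /\
  (\int[mu]_(x in Om) ((u x) ^+ 2)%:E < +oo)%E.

Definition L2inner (u v : Rn R n -> R) : R :=
  fine (\int[mu]_(x in Om) (u x * v x)%:E).

Definition L2norm (u : Rn R n -> R) : R :=
  Num.sqrt (fine (\int[mu]_(x in Om) ((u x) ^+ 2)%:E)).

Definition L0norm (u : Rn R n -> R) : R :=
  fine (mu (Om `&` [set x | u x != 0])).

Definition chi (u : Rn R n -> R) (x : Rn R n) : R :=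
  if u x != 0 then 1 else 0.

Definition Uad (b : \bar R) (v : Rn R n -> R) : Prop :=
  inL2 v /\ {ae mu, forall x, Om x -> ((`|v x|)%:E <= b)%E}.

Definition g_reg (alpha beta : R) (u : Rn R n -> R) : R :=
  alpha / 2 * L2norm u ^+ 2 + beta * L0norm u.

Definition weak_cvgL2 (v : nat -> Rn R n -> R) (w : Rn R n -> R) : Prop :=
  forall z, inL2 z -> (fun j => L2inner (v j) z) @ \oo --> L2inner w z.

Definition smooth_objective (f : (Rn R n -> R) -> R)
    (gradf : (Rn R n -> R) -> (Rn R n -> R)) : Prop :=
  (* f is a function on L^2 (equivalence classes) *)
  (forall u v, inL2 u -> inL2 v -> u = v %[ae mu in Om] -> f u = f v) /\
  (forall u v, inL2 u -> inL2 v -> u = v %[ae mu in Om] ->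
     gradf u = gradf v %[ae mu in Om]) /\
  (forall (v : nat -> Rn R n -> R) w, (forall j, inL2 (v j)) -> inL2 w ->
     weak_cvgL2 v w -> ((f w)%:E <= limn_einf (fun j => (f (v j))%:E))%E) /\
  (exists m : R, forall u, inL2 u -> m <= f u) /\
  (* Frechet differentiable, gradf u the Riesz representative *)
  (forall u, inL2 u -> inL2 (gradf u)) /\
  (forall u, inL2 u -> forall eps : R, 0 < eps -> exists2 delta : R, 0 < delta &
     forall v, inL2 v -> L2norm (v \- u) < delta ->
       `|f v - f u - L2inner (gradf u) (v \- u)| <= eps * L2norm (v \- u)) /\
  (exists Lf : R, forall u v, inL2 u -> inL2 v ->
     L2norm (gradf u \- gradf v) <= Lf * L2norm (u \- v)).

Definition iht_model (f : (Rn R n -> R) -> R)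
    (gradf : (Rn R n -> R) -> (Rn R n -> R)) (alpha beta L : R)
    (uk u : Rn R n -> R) : R :=
  f uk + L2inner (gradf uk) (u \- uk) + L / 2 * L2norm (u \- uk) ^+ 2
  + g_reg alpha beta u.

Definition iht_sequence (f : (Rn R n -> R) -> R)
    (gradf : (Rn R n -> R) -> (Rn R n -> R)) (alpha beta L : R) (b : \bar R)
    (u : nat -> Rn R n -> R) : Prop :=
  Uad b (u 0%N) /\
  forall k : nat, Uad b (u k.+1) /\
    forall v, Uad b v ->
      iht_model f gradf alpha beta L (u k) (u k.+1) <=
      iht_model f gradf alpha beta L (u k) v.

End Defs.

(* The IHT surrogate is the integral over Om of a scalar function of u(x), so
   its global minimizer u_{k+1} also minimizes that scalar function at almost
   every x: otherwise redefining u_{k+1} on the bad set lowers the integral.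
   Pointwise, no value s with 0 < |s| < sigma is optimal.  Either the
   projection onto [-b, b] of the unconstrained minimizer of the quadratic part
   is strictly closer to that minimizer than s, or s is the minimizer itself,
   and then jumping to 0 saves beta - (L + alpha) s^2 / 2 > 0 because
   sigma^2 <= 2 beta / (L + alpha).  So every iterate u_j, j >= 1, is a.e.
   either 0 or of modulus at least sigma, and wherever chi_k and chi_{k+1}
   differ, |u_{k+1} - u_k| >= sigma. *)

From HB Require Import structures.
From mathcomp Require Import all_boot all_order all_algebra.
From mathcomp Require Import all_classical all_reals all_analysis measurable_realfun.
From mathcomp Require Import ring lra.
Import Order.TTheory GRing.Theory Num.Theory.
Import numFieldNormedType.Exports.
Local Open Scope classical_set_scope.
Local Open Scope ring_scope.

Section ScalarModel.
Context {R : realFieldType}.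
Variables (G a alpha beta L : R).
Hypothesis La_gt0 : 0 < L + alpha.

Definition scalar_quad (s : R) : R :=
  G * (s - a) + L / 2 * (s - a) ^+ 2 + alpha / 2 * s ^+ 2.

Definition scalar_model (s : R) : R :=
  scalar_quad s + beta * (if s != 0 then 1 else 0).

Definition scalar_argmin : R := (L * a - G) / (L + alpha).

Lemma scalar_quadE s : scalar_quad s =
  scalar_quad scalar_argmin + (L + alpha) / 2 * (s - scalar_argmin) ^+ 2.
Proof. by rewrite /scalar_quad /scalar_argmin; field; rewrite gt_eqF. Qed.

Lemma scalar_model_lt_closer (t m : R) : 0 <= beta -> t != 0 ->
  (m - scalar_argmin) ^+ 2 < (t - scalar_argmin) ^+ 2 ->
  scalar_model m < scalar_model t.
Proof.
move=> beta_ge0 t_neq0 closer; rewrite /scalar_model t_neq0 mulr1.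
rewrite [scalar_quad m]scalar_quadE [scalar_quad t]scalar_quadE.
have : (L + alpha) / 2 * (m - scalar_argmin) ^+ 2 <
       (L + alpha) / 2 * (t - scalar_argmin) ^+ 2 by rewrite ltr_pM2l ?divr_gt0.
by case: (m != 0); rewrite ?mulr1 ?mulr0; lra.
Qed.

Lemma gap_quad_lt (s sig : R) : `|s| < sig -> sig ^+ 2 <= 2 * beta / (L + alpha) ->
  (L + alpha) / 2 * s ^+ 2 < beta.
Proof.
move=> s_lt sig_sqr_le.
have sqr_lt : s ^+ 2 < sig ^+ 2.
  by rewrite -real_normK ?num_real// ltrXn2r// (le_lt_trans (normr_ge0 s)).
have -> : beta = (L + alpha) / 2 * (2 * beta / (L + alpha)).
  by field; rewrite gt_eqF.
by rewrite ltr_pM2l ?divr_gt0// (lt_le_trans sqr_lt).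
Qed.

Lemma scalar_model0_lt_argmin : scalar_argmin != 0 ->
  (L + alpha) / 2 * scalar_argmin ^+ 2 < beta ->
  scalar_model 0 < scalar_model scalar_argmin.
Proof.
move=> argmin_neq0 small; rewrite /scalar_model argmin_neq0 eqxx mulr1 mulr0 addr0.
by rewrite [scalar_quad 0]scalar_quadE sub0r sqrrN; lra.
Qed.

End ScalarModel.

(* Projection onto [-b, b]: the identity for b = +oo, junk for b = -oo. *)
Definition proj_ball {R : realFieldType} (b : \bar R) (s : R) : R :=
  if b is r%:E then Num.max (- r) (Num.min r s) else s.

Lemma clamp_cases {R : realFieldType} (r s : R) : 0 < r ->
  [\/ s <= - r /\ Num.max (- r) (Num.min r s) = - r,
      - r <= s <= r /\ Num.max (- r) (Num.min r s) = s |
      r <= s /\ Num.max (- r) (Num.min r s) = r].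
Proof.
move=> r_gt0; have [_|r_lt_s] := leP s r.
  have [_|s_lt_r] := leP (- r) s; first exact: Or32.
  by apply: Or31; rewrite ltW.
by apply: Or33; rewrite ltW// max_r//; lra.
Qed.

Section BallProjection.
Context {R : realFieldType} {b : \bar R}.
Hypothesis b_gt0 : (0 < b)%E.

Lemma proj_ball_le (s : R) : (`|proj_ball b s|%:E <= b)%E.
Proof.
rewrite /proj_ball; case: b b_gt0 => [r|_|//]; last exact: leey.
rewrite lte_fin lee_fin ler_norml => r_gt0.
by case: (clamp_cases r s r_gt0) => -[? ->]; lra.
Qed.

Lemma norm_proj_ball_le (s : R) : `|proj_ball b s| <= `|s|.
Proof.
rewrite /proj_ball; case: b b_gt0 => [r|//|//]; rewrite lte_fin => r_gt0.
case: (clamp_cases r s r_gt0) => -[? ->] //.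
  by rewrite normrN gtr0_norm// ler0_norm; lra.
by rewrite gtr0_norm// ger0_norm; lra.
Qed.

Lemma proj_ball_lt_dist (s y : R) : (`|y|%:E <= b)%E -> y != proj_ball b s ->
  (proj_ball b s - s) ^+ 2 < (y - s) ^+ 2.
Proof.
rewrite /proj_ball; case: b b_gt0 => [r|_ _|//]; last first.
  by rewrite subrr expr0n /= => y_neq_s; rewrite exprn_even_gt0// subr_eq0.
rewrite lte_fin lee_fin ler_norml => r_gt0 /andP[yl yr].
case: (clamp_cases r s r_gt0) => -[? ->] y_neq.
- by rewrite neq_lt in y_neq; case/orP: y_neq; nra.
- by rewrite subrr expr0n /= exprn_even_gt0// subr_eq0.
- by rewrite neq_lt in y_neq; case/orP: y_neq; nra.
Qed.

Lemma proj_ball_id (s : R) : (`|proj_ball b s|%:E < b)%E -> proj_ball b s = s.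
Proof.
rewrite /proj_ball; case: b b_gt0 => [r|//|//]; rewrite !lte_fin ltr_norml => r_gt0.
by case: (clamp_cases r s r_gt0) => -[? ->] //; lra.
Qed.

End BallProjection.

Lemma measurable_proj_ball {R : realType} (b : \bar R) :
  measurable_fun setT (proj_ball b).
Proof.
case: b => [r| |] /=; [|exact: measurable_id..].
apply: measurable_maxr; first exact: measurable_cst.
by apply: measurable_minr; [exact: measurable_cst|exact: measurable_id].
Qed.

Lemma ler_powR_gap_chi {R : realType} (sig p a c : R) : 0 <= sig -> 0 <= p ->
  (a != 0 -> sig <= `|a|) -> (c != 0 -> sig <= `|c|) ->
  sig `^ p * `|(if a != 0 then 1 else 0) - (if c != 0 then 1 else 0)| <= `|c - a| `^ p.
Proof.
move=> sig_ge0 p_ge0 a_gap c_gap.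
have powR_gap (z : R) : sig <= `|z| -> sig `^ p <= `|z| `^ p.
  by move=> ?; apply: ge0_ler_powR; rewrite ?nnegrE.
case: (eqVneq a 0) => [->|a_neq0]; case: (eqVneq c 0) => [->|c_neq0] /=;
  rewrite ?subrr ?normr0 ?mulr0 ?powR_ge0// ?subr0 ?sub0r ?normrN ?normr1 ?mulr1.
- exact/powR_gap/c_gap.
- exact/powR_gap/a_gap.
Qed.

Section L2Space.
Context {R : realType} {n : nat} {mu : {measure set (n.-tuple R) -> \bar R}}.
Context {Om : set (n.-tuple R)}.
Hypotheses (mOm : measurable Om) (finOm : (mu Om < +oo)%E).
Local Notation T := (n.-tuple R).
Local Notation integrable_on f := (mu.-integrable Om (EFin \o f)).

Lemma integrableD_EFin {f g : T -> R} : integrable_on f -> integrable_on g ->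
  integrable_on (fun x => f x + g x).
Proof.
move=> fi gi; have := integrableD mOm fi gi.
by apply: eq_integrable => // x _ /=; rewrite EFinD.
Qed.

Lemma integrableB_EFin {f g : T -> R} : integrable_on f -> integrable_on g ->
  integrable_on (fun x => f x - g x).
Proof.
move=> fi gi; have := integrableB mOm fi gi.
by apply: eq_integrable => // x _ /=; rewrite EFinB.
Qed.

Lemma integrableZl_EFin (c : R) {f : T -> R} : integrable_on f ->
  integrable_on (fun x => c * f x).
Proof.
move=> fi; have := integrableZl mOm c fi.
by apply: eq_integrable => // x _ /=; rewrite EFinM.
Qed.

Lemma inL2E (u : T -> R) :
  inL2 mu Om u <-> measurable_fun Om u /\ integrable_on (fun x => u x ^+ 2).
Proof.
have abs_sqr : (\int[mu]_(x in Om) `|(EFin \o (fun x => u x ^+ 2)%R) x| =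
                \int[mu]_(x in Om) (u x ^+ 2)%R%:E)%E.
  by apply: eq_integral => x _; rewrite /= ger0_norm ?sqr_ge0.
split=> [[mf fi]|[mf /integrableP[_]]]; last by rewrite abs_sqr.
split=> //; apply/integrableP; split; last by rewrite abs_sqr.
exact/measurable_EFinP/measurable_funX.
Qed.

Lemma inL2_measurable {u : T -> R} : inL2 mu Om u -> measurable_fun Om u.
Proof. by case. Qed.

Lemma inL2_integrable_sqr {u : T -> R} : inL2 mu Om u ->
  integrable_on (fun x => u x ^+ 2).
Proof. by case/inL2E. Qed.

Lemma inL2_le {h g : T -> R} : measurable_fun Om h ->
  (forall x, Om x -> `|h x| <= `|g x|) -> inL2 mu Om g -> inL2 mu Om h.
Proof.
move=> mh hg /inL2E[_ gi]; apply/inL2E; split => //.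
apply: (le_integrable mOm _ _ gi); first exact/measurable_EFinP/measurable_funX.
move=> x Ox /=; rewrite lee_fin !ger0_norm ?sqr_ge0//.
by rewrite -[h x ^+ 2]real_normK ?num_real// -[g x ^+ 2]real_normK ?num_real//
  lerXn2r ?nnegrE ?hg.
Qed.

Lemma inL2_mul_integrable {u v : T -> R} : inL2 mu Om u -> inL2 mu Om v ->
  integrable_on (fun x => u x * v x).
Proof.
move=> /inL2E[mu' ui] /inL2E[mv vi].
apply: (le_integrable mOm _ _ (integrableD_EFin ui vi)).
  exact/measurable_EFinP/measurable_funM.
move=> x _; rewrite /= lee_fin normrM [X in _ <= X]ger0_norm ?addr_ge0 ?sqr_ge0//.
have := sqr_ge0 (`|u x| - `|v x|).
rewrite -[u x ^+ 2]real_normK ?num_real// -[v x ^+ 2]real_normK ?num_real//.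
by move: (normr_ge0 (u x)) (normr_ge0 (v x)); nra.
Qed.

Lemma inL2D {u v : T -> R} : inL2 mu Om u -> inL2 mu Om v ->
  inL2 mu Om (fun x => u x + v x).
Proof.
move=> /inL2E[mu' ui] /inL2E[mv vi]; apply/inL2E; split.
  exact: measurable_funD.
apply: (le_integrable mOm _ _
  (integrableD_EFin (integrableZl_EFin 2 ui) (integrableZl_EFin 2 vi))).
  exact/measurable_EFinP/measurable_funX/measurable_funD.
move=> x _; rewrite /= lee_fin (ger0_norm (sqr_ge0 _)) ger0_norm; last first.
  by rewrite addr_ge0// mulr_ge0// sqr_ge0.
by have := sqr_ge0 (u x - v x); nra.
Qed.

Lemma inL2Z (c : R) {u : T -> R} : inL2 mu Om u -> inL2 mu Om (fun x => c * u x).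
Proof.
move=> /inL2E[mf ui]; apply/inL2E; split; first exact: measurable_funM.
have := integrableZl_EFin (c ^+ 2) ui.
by apply: eq_integrable => // x _ /=; rewrite exprMn.
Qed.

Lemma inL2B {u v : T -> R} : inL2 mu Om u -> inL2 mu Om v -> inL2 mu Om (u \- v).
Proof.
move=> ui vi; have := inL2D ui (inL2Z (-1) vi).
by congr (inL2 _ _); apply/funext => x; rewrite mulN1r.
Qed.

Lemma L2normE (u : T -> R) : L2norm mu Om u ^+ 2 = \int[mu]_(x in Om) u x ^+ 2.
Proof. by rewrite sqr_sqrtr// Rintegral_ge0 // => x _; exact: sqr_ge0. Qed.

Lemma measurable_support {v : T -> R} : measurable_fun Om v ->
  measurable (Om `&` [set x | v x != 0]).
Proof.
move=> mv; rewrite (_ : [set x | v x != 0] = v @^-1` (~` [set 0])).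
  exact: mv mOm _ (measurableC (measurable_set1 _)).
by apply/seteqP; split => x /= /eqP.
Qed.

Lemma chi_indic (v : T -> R) : {in Om, chi v =1 \1_(Om `&` [set x | v x != 0])}.
Proof.
move=> x /[!inE] Ox; rewrite indicE /chi; case: ifP => /= vx.
  by rewrite mem_set.
by rewrite memNset// => -[_ /=]; rewrite vx.
Qed.

Lemma measurable_chi {v : T -> R} : measurable_fun Om v -> measurable_fun Om (chi v).
Proof.
move=> mv; apply: (eq_measurable_fun (\1_(Om `&` [set x | v x != 0]) : T -> R)).
  by move=> x xOm; rewrite chi_indic.
by apply: measurable_indic; exact: measurable_support.
Qed.

Lemma integrable_chi {v : T -> R} : measurable_fun Om v -> integrable_on (chi v).
Proof.
move=> mv; apply: measurable_bounded_integrable => //; first exact: measurable_chi.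
rewrite /bounded_near; near=> M => x _; apply: (@le_trans _ _ 1).
  by rewrite /chi; case: ifP; rewrite ?normr1 ?normr0.
by near: M; exact: nbhs_pinfty_ge.
Unshelve. all: by end_near. Qed.

Lemma L0normE (v : T -> R) : measurable_fun Om v ->
  L0norm mu Om v = \int[mu]_(x in Om) chi v x.
Proof.
move=> mv; rewrite /L0norm /Rintegral.
rewrite (eq_integral (fun x => (\1_(Om `&` [set x | v x != 0]) x)%:E)); last first.
  by move=> x Ox; rewrite chi_indic.
rewrite integral_indic//; last exact: measurable_support.
congr (fine (mu _)).
by apply/seteqP; split => x /= [] // [].
Qed.

Section ScalarModelIntegral.
Context {alpha beta L : R} {G uk v : T -> R}.
Hypotheses (G_L2 : inL2 mu Om G) (uk_L2 : inL2 mu Om uk) (v_L2 : inL2 mu Om v).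

Let dv_L2 : inL2 mu Om (v \- uk) := inL2B v_L2 uk_L2.
Let lin_int := inL2_mul_integrable G_L2 dv_L2.
Let prox_int := inL2_integrable_sqr dv_L2.
Let ridge_int := inL2_integrable_sqr v_L2.
Let supp_int := integrable_chi (inL2_measurable v_L2).

Lemma integrable_scalar_model :
  integrable_on (fun x => scalar_model (G x) (uk x) alpha beta L (v x)).
Proof.
exact: integrableD_EFin (integrableD_EFin (integrableD_EFin lin_int
  (integrableZl_EFin _ prox_int)) (integrableZl_EFin _ ridge_int))
  (integrableZl_EFin _ supp_int).
Qed.

Lemma Rintegral_scalar_model :
  \int[mu]_(x in Om) scalar_model (G x) (uk x) alpha beta L (v x) =
  \int[mu]_(x in Om) (G x * (v x - uk x))
  + L / 2 * \int[mu]_(x in Om) (v x - uk x) ^+ 2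
  + alpha / 2 * \int[mu]_(x in Om) v x ^+ 2 + beta * \int[mu]_(x in Om) chi v x.
Proof.
have lin_prox_int := integrableD_EFin lin_int (integrableZl_EFin (L / 2) prox_int).
have quad_int := integrableD_EFin lin_prox_int (integrableZl_EFin (alpha / 2) ridge_int).
rewrite /scalar_model /scalar_quad.
rewrite (RintegralD mOm quad_int (integrableZl_EFin beta supp_int)).
rewrite (RintegralD mOm lin_prox_int (integrableZl_EFin _ ridge_int)).
rewrite (RintegralD mOm lin_int (integrableZl_EFin _ prox_int)).
by rewrite (RintegralZl _ mOm prox_int) (RintegralZl _ mOm ridge_int)
  (RintegralZl _ mOm supp_int).
Qed.

End ScalarModelIntegral.

Lemma iht_modelE f gradf alpha beta L (uk v : T -> R) :
  inL2 mu Om uk -> inL2 mu Om (gradf uk) -> inL2 mu Om v ->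
  iht_model mu Om f gradf alpha beta L uk v =
  f uk + \int[mu]_(x in Om) scalar_model (gradf uk x) (uk x) alpha beta L (v x).
Proof.
move=> uk_L2 G_L2 v_L2; rewrite Rintegral_scalar_model//.
rewrite /iht_model /g_reg !L2normE L0normE; last exact: inL2_measurable.
by rewrite /L2inner /Rintegral /=; lra.
Qed.

Lemma ae_eq0_Rintegral_le0 {d : T -> R} : integrable_on d ->
  (forall x, Om x -> 0 <= d x) -> \int[mu]_(x in Om) d x <= 0 ->
  {ae mu, forall x, Om x -> d x = 0}.
Proof.
move=> di d_ge0 d_le0.
have d0 : \int[mu]_(x in Om) d x = 0.
  by apply/eqP; rewrite eq_le d_le0 Rintegral_ge0.
have : ae_eq mu Om (EFin \o d) (cst 0).
  apply/ae_eq_integral_abs => //; first by case/integrableP: di.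
  transitivity (\int[mu]_(x in Om) (d x)%:E)%E.
    by apply: eq_integral => x /[!inE] Ox; rewrite /= ger0_norm// d_ge0.
  have := integrable_fin_num mOm di => /fineK <-.
  by move: d0; rewrite /Rintegral => ->.
by apply: filterS => x dx0 Ox; case: (dx0 Ox).
Qed.

Lemma measurable_patch (E : set T) (g h : T -> R) : measurable E ->
  measurable_fun Om g -> measurable_fun Om h -> measurable_fun Om (patch h E g).
Proof.
move=> mE mg mh; rewrite (_ : patch h E g = h \+ \1_E \* (g \- h)).
  apply: (measurable_funD mh (measurable_funM (measurable_indic mE) _)).
  exact: measurable_funB mg mh.
apply/funext => x; rewrite /patch /= indicE.
by case: (x \in E); rewrite ?mul1r ?mul0r ?addr0 // addrC subrK.
Qed.

Lemma support_change_le_Lp {u v : T -> R} {sig p : R} :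
  measurable_fun Om u -> measurable_fun Om v -> 0 <= sig -> 0 <= p ->
  {ae mu, forall x, Om x -> u x != 0 -> sig <= `|u x|} ->
  {ae mu, forall x, Om x -> v x != 0 -> sig <= `|v x|} ->
  ((sig `^ p)%:E * \int[mu]_(x in Om) (`|chi u x - chi v x|)%:E <=
   \int[mu]_(x in Om) (`|v x - u x| `^ p)%:E)%E.
Proof.
move=> mu' mv sig_ge0 p_ge0 u_gap v_gap.
have mjump : measurable_fun Om (fun x => `|chi u x - chi v x|).
  exact: measurableT_comp (@normr_measurable R setT)
    (measurable_funB (measurable_chi mu') (measurable_chi mv)).
have jump_ge0 x : Om x -> (0 <= (`|chi u x - chi v x|)%:E)%E.
  by rewrite lee_fin.
rewrite -(ge0_integralZl_EFin _ mOm jump_ge0 ((measurable_EFinP _ _).2 mjump)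
  (powR_ge0 sig p)).
apply: ae_ge0_le_integral => //.
- by move=> x _; rewrite -EFinM lee_fin mulr_ge0 ?powR_ge0.
- exact/measurable_EFinP/measurable_funM.
- apply/measurable_EFinP; apply: (measurableT_comp (measurable_powR p)).
  exact: measurableT_comp (@normr_measurable R setT) (measurable_funB mv mu').
apply: filterS2 u_gap v_gap => x ux vx Ox.
by rewrite -EFinM lee_fin; apply: ler_powR_gap_chi => //; [exact: ux|exact: vx].
Qed.

Section SupportGap.
Context {f : (T -> R) -> R} {gradf : (T -> R) -> T -> R}.
Context {alpha beta L sig : R} {b : \bar R}.
Hypotheses (La_gt0 : 0 < L + alpha) (beta_ge0 : 0 <= beta) (sig_gt0 : 0 < sig).
Hypotheses (sig_le_b : (sig%:E <= b)%E) (sig_sqr_le : sig ^+ 2 <= 2 * beta / (L + alpha)).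
Context {uk t : T -> R}.
Hypotheses (uk_L2 : inL2 mu Om uk) (G_L2 : inL2 mu Om (gradf uk)) (t_ad : Uad mu Om b t).

Let b_gt0 : (0 < b)%E.
Proof. by apply: lt_le_trans sig_le_b; rewrite lte_fin. Qed.

Let norm_le_b (s : R) : `|s| < sig -> (`|s|%:E <= b)%E.
Proof. by move=> s_lt; apply: le_trans sig_le_b; rewrite lee_fin ltW. Qed.

Let t_L2 : inL2 mu Om t := t_ad.1.
Let mt : measurable_fun Om t := inL2_measurable t_L2.

Let t0 x := scalar_argmin (gradf uk x) (uk x) alpha L.
Let m x := proj_ball b (t0 x).

Let t0_L2 : inL2 mu Om t0.
Proof.
rewrite (_ : t0 = fun x => (L + alpha)^-1 * (L * uk x - gradf uk x)).
  exact: inL2Z (inL2B (inL2Z L uk_L2) G_L2).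
by apply/funext => x; rewrite /t0 /scalar_argmin mulrC.
Qed.

Let mm : measurable_fun Om m.
Proof. exact: measurableT_comp (measurable_proj_ball b) (inL2_measurable t0_L2). Qed.

(* On [E] the competitor [w] is the strictly better value given by
   [scalar_model_lt_closer] or [scalar_model0_lt_argmin]. *)
Let E := Om `&` [set x | 0 < `|t x| < sig].
Let N := Om `&` [set x | (t \- m) x != 0].
Let w := patch t E (patch (cst 0) N m).

Let mE : measurable E.
Proof.
rewrite (_ : E = Om `&` t @^-1` ((@Num.norm _ R) @^-1` `]0, sig[)).
  apply: mt => //; rewrite -[X in measurable X]setTI.
  exact: normr_measurable measurableT _ (measurable_itv _).
by apply/seteqP; split => x [Ox /= xE]; split => //=; rewrite in_itv in xE *.
Qed.

Let wE x : E x -> w x = if t x != m x then m x else 0.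
Proof.
move=> Ex; have Ox : Om x by case: Ex.
rewrite /w /patch mem_set//; congr (if _ then _ else _).
apply/idP/idP => [/set_mem[_ /=]|t_neq_m]; first by rewrite subr_eq0.
by rewrite inE; split; rewrite /= ?subr_eq0.
Qed.

Let wNE x : ~ E x -> w x = t x.
Proof. by move=> nEx; rewrite /w /patch memNset. Qed.

Let w_ad : Uad mu Om b w.
Proof.
have mw : measurable_fun Om w.
  apply: measurable_patch mE _ mt; apply: measurable_patch mm (measurable_cst _).
  exact: measurable_support (measurable_funB mt mm).
have abs_L2 u : inL2 mu Om u -> inL2 mu Om (fun x => `|u x|).
  move=> u_L2; apply: (inL2_le _ _ u_L2) => [|x _]; last by rewrite normr_id.
  exact: measurableT_comp (@normr_measurable R setT) (inL2_measurable u_L2).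
split.
  apply: inL2_le mw _ (inL2D (abs_L2 _ t_L2) (abs_L2 _ t0_L2)) => x _.
  rewrite [X in _ <= X]ger0_norm ?addr_ge0//.
  have [Ex|nEx] := pselect (E x); last by rewrite wNE// lerDl.
  rewrite wE//; case: ifP => _; last by rewrite normr0 addr_ge0.
  by apply: (le_trans (norm_proj_ball_le b_gt0 (t0 x))); rewrite lerDr.
move: t_ad.2; apply: filterS => x tb Ox.
have [Ex|nEx] := pselect (E x); last by rewrite wNE//; exact: tb.
rewrite wE//; case: ifP => _; first exact: proj_ball_le.
by rewrite normr0 ltW.
Qed.

Let w_lt x : E x ->
  scalar_model (gradf uk x) (uk x) alpha beta L (w x) <
  scalar_model (gradf uk x) (uk x) alpha beta L (t x).
Proof.
move=> Ex; have [Ox /andP[t_gt0 t_lt]] := Ex.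
have t_neq0 : t x != 0 by rewrite -normr_gt0.
rewrite wE//; case: ifPn => [t_neq_m|/negPn/eqP t_eq_m].
  apply: scalar_model_lt_closer => //.
  by rewrite /m; apply: proj_ball_lt_dist b_gt0 _ _ (norm_le_b _ t_lt) t_neq_m.
have m_eq_t0 : m x = t0 x.
  apply: (proj_ball_id b_gt0).
  by rewrite -/(m x) -t_eq_m (lt_le_trans _ sig_le_b).
rewrite t_eq_m m_eq_t0 in t_neq0 t_lt *.
apply: scalar_model0_lt_argmin => //.
exact: gap_quad_lt t_lt sig_sqr_le.
Qed.

Lemma support_gap :
  (forall v, Uad mu Om b v ->
     iht_model mu Om f gradf alpha beta L uk t <=
     iht_model mu Om f gradf alpha beta L uk v) ->
  {ae mu, forall x, Om x -> t x != 0 -> sig <= `|t x|}.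
Proof.
move=> t_opt; have w_L2 := w_ad.1.
pose d x := scalar_model (gradf uk x) (uk x) alpha beta L (t x)
          - scalar_model (gradf uk x) (uk x) alpha beta L (w x).
have d_ge0 x : Om x -> 0 <= d x.
  move=> Ox; have [Ex|nEx] := pselect (E x); first by rewrite subr_ge0 ltW// w_lt.
  by rewrite /d wNE// subrr.
have d_int : integrable_on d.
  by apply: integrableB_EFin; exact: integrable_scalar_model.
have d_le0 : \int[mu]_(x in Om) d x <= 0.
  rewrite /d RintegralB// ?subr_le0; try exact: integrable_scalar_model.
  by have := t_opt w w_ad; rewrite !iht_modelE// lerD2l.
move: (ae_eq0_Rintegral_le0 d_int d_ge0 d_le0); apply: filterS => x dx0 Ox t_neq0.
rewrite leNgt; apply/negP => t_lt.
have Ex : E x by split => //=; rewrite normr_gt0 t_neq0.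
by have := w_lt _ Ex; rewrite -subr_gt0 -/(d x) dx0// ltxx.
Qed.

End SupportGap.
End L2Space.

Lemma lebesgue_bounded_lty {R : realType} {n : nat}
    {mu : {measure set (n.-tuple R) -> \bar R}} {Om : set (n.-tuple R)} :
  is_lebesgue_measure mu -> measurable Om -> is_bounded_set Om -> (mu Om < +oo)%E.
Proof.
move=> mu_leb mOm [M OmM].
pose a : n.-tuple R := [tuple - (`|M| + 1) | i < n].
pose c : n.-tuple R := [tuple `|M| + 1 | i < n].
have a_le_c i : tnth a i <= tnth c i.
  by rewrite !tnth_mktuple; have := normr_ge0 M; lra.
pose box := [set x : n.-tuple R | forall i, tnth a i <= tnth x i < tnth c i].
have mbox : measurable box.
  rewrite (_ : box = \big[setI/setT]_(i <- enum 'I_n)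
      ((fun x : n.-tuple R => tnth x i) @^-1` `[tnth a i, tnth c i[)).
    apply: bigsetI_measurable => i _; rewrite -[X in measurable X]setTI.
    exact: measurable_tnth measurableT _ (measurable_itv _).
  rewrite -bigcap_seq; apply/seteqP; split => x /=.
    by move=> xbox i _; rewrite /= in_itv /= xbox.
  by move=> xbox i; have := xbox i; rewrite /= mem_enum in_itv /=; apply.
have Om_box : Om `<=` box.
  move=> x Ox i; rewrite !tnth_mktuple.
  have := OmM x Ox i; rewrite ler_norml => /andP[? ?].
  by have := ler_norm M; have := ler_normr M; lra.
have box_lty : (mu box < +oo)%E by rewrite /box mu_leb// ltry.
by apply: le_lt_trans (le_measure _ _ _ Om_box) box_lty; rewrite inE.
Qed.

Definition gap_radius {R : realType} (b : \bar R) (c : R) : R :=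
  fine (Order.min b (Num.sqrt c)%:E).

Lemma gap_radius_spec {R : realType} {b : \bar R} {c : R} : (0 < b)%E -> 0 < c ->
  [/\ 0 < gap_radius b c, ((gap_radius b c)%:E <= b)%E & gap_radius b c ^+ 2 <= c].
Proof.
move=> b_gt0 c_gt0; rewrite /gap_radius.
have q_gt0 : 0 < Num.sqrt c by rewrite sqrtr_gt0.
have qq : Num.sqrt c ^+ 2 = c by rewrite sqr_sqrtr// ltW.
case: b b_gt0 => [r|_|//]; last by rewrite min_r ?leey//= qq.
rewrite lte_fin -EFin_min /= lee_fin => r_gt0.
have m_gt0 : 0 < Num.min r (Num.sqrt c) by rewrite lt_min r_gt0.
have m_le_q : Num.min r (Num.sqrt c) <= Num.sqrt c by rewrite ge_min lexx orbT.
split => //; first by rewrite ge_min lexx.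
by rewrite -[X in _ <= X]qq; nra.
Qed.

Lemma iht_sequence_Uad {R : realType} {n : nat}
    {mu : {measure set (n.-tuple R) -> \bar R}} {Om : set (n.-tuple R)}
    {f gradf alpha beta L b u} :
  iht_sequence mu Om f gradf alpha beta L b u -> forall j, Uad mu Om b (u j).
Proof. by case=> u0_ad iht [|j] //; case: (iht j). Qed.

Theorem mainTheorem7 (R : realType) (n : nat)
    (mu : {measure set (n.-tuple R) -> \bar R})
    (Om : set (n.-tuple R))
    (alpha beta L : R) (b : \bar R)
    (f : (n.-tuple R -> R) -> R) (gradf : (n.-tuple R -> R) -> (n.-tuple R -> R))
    (u : nat -> n.-tuple R -> R) :
  is_lebesgue_measure mu ->
  measurable Om -> is_open_set Om -> is_bounded_set Om ->
  0 <= alpha -> 0 < beta -> (0 < b)%E -> 0 < L ->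
  smooth_objective mu Om f gradf ->
  iht_sequence mu Om f gradf alpha beta L b u ->
  let sigma : R := fine (Order.min b (Num.sqrt (2 * beta / (L + alpha)))%:E) in
  forall (k : nat) (p : R), (1 <= k)%N -> 1 <= p ->
    (\int[mu]_(x in Om) ((`|u k.+1 x - u k x|) `^ p)%:E >=
     (sigma `^ p)%:E * \int[mu]_(x in Om) (`|chi (u k) x - chi (u k.+1) x|)%:E)%E.
Proof.
move=> mu_leb mOm _ Om_bdd alpha_ge0 beta_gt0 b_gt0 L_gt0 f_smooth iht.
rewrite -/(gap_radius b _) /= => k p k_ge1 p_ge1.
have finOm := lebesgue_bounded_lty mu_leb mOm Om_bdd.
have La_gt0 : 0 < L + alpha by lra.
have [sig_gt0 sig_le_b sig_sqr_le] := gap_radius_spec b_gt0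
  (divr_gt0 (mulr_gt0 (ltr0Sn _ 1) beta_gt0) La_gt0).
have grad_L2 : forall v, inL2 mu Om v -> inL2 mu Om (gradf v).
  by case: f_smooth => _ [_ [_ [_ []]]].
have iter_L2 j : inL2 mu Om (u j) := (iht_sequence_Uad iht j).1.
have gap j : {ae mu, forall x, Om x -> u j.+1 x != 0 ->
    gap_radius b (2 * beta / (L + alpha)) <= `|u j.+1 x|}.
  have [uj1_ad uj1_opt] := iht.2 j.
  exact: (support_gap mOm finOm La_gt0 (ltW beta_gt0) sig_gt0 sig_le_b sig_sqr_le
    (iter_L2 j) (grad_L2 _ (iter_L2 j)) uj1_ad uj1_opt).
have p_ge0 : 0 <= p by lra.
case: k k_ge1 => // k _.
exact: (support_change_le_Lp mOm (inL2_measurable (iter_L2 _))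
  (inL2_measurable (iter_L2 _)) (ltW sig_gt0) p_ge0 (gap k) (gap k.+1)).
Qed.
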